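(* Let $P_0=(|P_0|,\preccurlyeq_0)$ be a finite poset with $|P_0|=\{x_1,\dots,x_{m_0}\}$, and let $S\subseteq|P_0|$ be a chain. Fix nonnegative integer values of $m_i$ for all $i$ with $x_i\notin S$, and let $f$ be the polynomial with rational coefficients in the variables $(m_i)_{x_i\in S}$ such that $L_+(P_0;m_1,\dots,m_{m_0})=f((m_i)_{x_i\in S})$ for all nonnegative integer values of these variables. Then the total degree of $f$ equals $\sum m_i$, summed over those $i$ such that $x_i$ is $\preccurlyeq_0$-incomparable with at least one element of $S$.
   Context: For nonnegative integers $m_1,\dots,m_{m_0}$ let $C_1,\dots,C_{m_0}$ be pairwise disjoint chains, $C_i$ being $x_{i,1}<\dots<x_{i,m_i}$. The lexicographic sum $P=P_0*(C_1,\dots,C_{m_0})$ is the poset on $\bigcup_i|C_i|$ with $x_{i,j}\preccurlyeq x_{i',j'}$ iff either $i\ne i'$ and $x_i\preccurlyeq_0x_{i'}$, or $i=i'$ and $j\le j'$. $L_+(P_0;m_1,\dots,m_{m_0})$ is the number of linearizations (total orders refining $\preccurlyeq$) of $P$. When $S$ is a chain, such a polynomial $f$ exists and is unique. The total degree of a multivariable polynomial is the maximum over its monomials of the sum of the exponents. *)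

From HB Require Import structures.
From mathcomp Require Import all_boot all_order all_algebra.
Set Implicit Arguments. Unset Strict Implicit. Unset Printing Implicit Defensive.
Import Order.TTheory GRing.Theory Num.Theory.

(* Elements of the lexicographic sum P0 * (C_x)_x : pairs (x, j) with j < m x. *)
Definition lexsum_elt (d : Order.disp_t) (T : finPOrderType d) (m : T -> nat) :=
  {x : T & 'I_(m x)}.

Definition lexsum_le (d : Order.disp_t) (T : finPOrderType d) (m : T -> nat)
  (a b : lexsum_elt m) : bool :=
  if tag a == tag b then (nat_of_ord (tagged a) <= nat_of_ord (tagged b))%N
  else (tag a <= tag b)%O.

Definition is_linearization (U : finType) (le : rel U) (R : {ffun U * U -> bool}) : bool :=
  [&& [forall a, R (a, a)],
      [forall a, forall b, R (a, b) && R (b, a) ==> (a == b)],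
      [forall a, forall b, forall c, R (a, b) && R (b, c) ==> R (a, c)],
      [forall a, forall b, R (a, b) || R (b, a)] &
      [forall a, forall b, le a b ==> R (a, b)]].

Definition Lplus (d : Order.disp_t) (T : finPOrderType d) (m : T -> nat) : nat :=
  #|[pred R : {ffun lexsum_elt m * lexsum_elt m -> bool} |
      is_linearization (@lexsum_le d T m) R]|.

(* Multivariate polynomials with rational coefficients in variables indexed by
   a finite type V: a finite list of (exponent vector, coefficient) terms. *)
Definition mpoly (V : finType) := seq ({ffun V -> nat} * rat).

Definition mcoef (V : finType) (f : mpoly V) (e : {ffun V -> nat}) : rat :=
  (\sum_(p <- f | p.1 == e) p.2)%R.

Definition mdeg (V : finType) (f : mpoly V) : nat :=
  \max_(p <- f | mcoef f p.1 != 0%R) \sum_(v : V) p.1 v.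

Definition meval (V : finType) (f : mpoly V) (x : V -> nat) : rat :=
  (\sum_(p <- f) p.2 * \prod_(v : V) ((x v)%:R ^+ p.1 v))%R.

Definition vars_in (V : finType) (f : mpoly V) (S : {set V}) : bool :=
  all (fun p : {ffun V -> nat} * rat => [forall v, (v \notin S) ==> (p.1 v == 0%N)]) f.

(* Let D be the sum of the m_i over the points incomparable to some element of
   the chain S, and let N be the total length of the chains over S.
   Upper bound: a linearization is determined by its restriction to the
   boundedly many elements off S together with, for each element over a point
   incomparable to S, the number of elements over S below it; every other
   comparison is forced, because the elements over S form a chain. Hence
   L_+ = O((N + 1) ^ D).
   Lower bound: if all chains over S have length t, the chain block at the
   height of a point incomparable to S has room to place each element over that
   point in any of B slots, independently, with t proportional to B; hence
   L_+ >= B ^ D.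
   Along the diagonal f is O(t ^ deg f), so the lower bound gives D <= deg f.
   After a Kronecker substitution m_s = t ^ w_s one monomial of top degree
   dominates f, while the upper bound gives L_+ = O(t ^ (max w * D)), so
   deg f <= D. *)

From HB Require Import structures.
From mathcomp Require Import all_boot all_order all_algebra.
From mathcomp Require Import zify ring lra.
Set Implicit Arguments. Unset Strict Implicit. Unset Printing Implicit Defensive.
Import Order.TTheory GRing.Theory Num.Theory.

Lemma mulnDr_small_inj K p p' r r' : r < K -> r' < K ->
  p * K + r = p' * K + r' -> p = p' /\ r = r'.
Proof. by move=> rK r'K e; move: (edivn_eq p rK); rewrite e edivn_eq // => -[]. Qed.

Lemma mulnD_lt_mul K p P r : p < P -> r < K -> p * K + r < P * K.
Proof.
move=> pP rK; apply: leq_trans (_ : p.+1 * K <= P * K); last by rewrite leq_mul2r pP orbT.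
by rewrite mulSn addnC ltn_add2r.
Qed.

Lemma leq_exp2rW k a b : a <= b -> a ^ k <= b ^ k.
Proof. by move=> ab; elim: k => // k IHk; rewrite !expnS leq_mul. Qed.

Lemma seq_argmax (X : eqType) (s : seq X) (F : X -> nat) : s != [::] ->
  exists2 x, x \in s & {in s, forall y, F y <= F x}.
Proof.
elim: s => // a s IHs _; have [->|/IHs[b bs b_max]] := eqVneq s [::].
  by exists a; rewrite ?mem_head // => y; rewrite inE => /eqP ->.
have [ab|ba] := leqP (F a) (F b).
  by exists b; rewrite ?inE ?bs ?orbT // => y; rewrite inE => /predU1P[->|/b_max].
exists a; rewrite ?mem_head // => y; rewrite inE => /predU1P[->//|/b_max Fy].
exact: leq_trans Fy (ltnW ba).
Qed.

Section Linearization.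
Variables (U : finType) (le : rel U).

Section OneLinearization.
Variable R : {ffun U * U -> bool}.
Hypothesis linR : is_linearization le R.

Lemma lin_le a b : le a b -> R (a, b).
Proof. by case/and5P: linR => _ _ _ _ /forallP/(_ a)/forallP/(_ b)/implyP. Qed.

Lemma lin_total a b : R (a, b) || R (b, a).
Proof. by case/and5P: linR => _ _ _ /forallP/(_ a)/forallP/(_ b). Qed.

Lemma lin_trans a b c : R (a, b) -> R (b, c) -> R (a, c).
Proof.
case/and5P: linR => _ _ /forallP/(_ a)/forallP/(_ b)/forallP/(_ c)/implyP tr _ _.
by move=> Rab Rbc; apply: tr; rewrite Rab Rbc.
Qed.

Lemma lin_anti a b : R (a, b) -> R (b, a) -> a = b.
Proof.
case/and5P: linR => _ /forallP/(_ a)/forallP/(_ b)/implyP anti _ _ _.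
by move=> Rab Rba; apply/eqP; apply: anti; rewrite Rab Rba.
Qed.

Lemma lin_asym a b : a != b -> R (a, b) = ~~ R (b, a).
Proof.
move=> nab; case Rab: (R (a, b)); last by have := lin_total a b; rewrite Rab => /= ->.
by apply/esym/negP=> /(lin_anti Rab) eab; rewrite eab eqxx in nab.
Qed.

Lemma lin_comparableE a b : le a b || le b a -> R (a, b) = le a b.
Proof.
case lab: (le a b) => /=; first by move=> _; apply: lin_le.
move=> lba; apply/negP=> Rab; have eab := lin_anti Rab (lin_le lba).
by subst b; rewrite lba in lab.
Qed.

End OneLinearization.

(* On a chain [A] every linearization agrees with [le], so the elements of [A]
   below [b] form an initial segment of the chain, determined by its size. *)
Lemma lin_chain_below_eq (R R' : {ffun U * U -> bool}) (A : {set U}) b :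
  is_linearization le R -> is_linearization le R' ->
  {in A &, forall e e', le e e' || le e' e} ->
  #|[set e in A | R (e, b)]| = #|[set e in A | R' (e, b)]| ->
  [set e in A | R (e, b)] = [set e in A | R' (e, b)].
Proof.
move=> linR linR' chA.
suff card_lt (R1 R2 : {ffun U * U -> bool}) e : is_linearization le R1 ->
    is_linearization le R2 -> e \in A -> R1 (e, b) -> ~~ R2 (e, b) ->
    #|[set e in A | R2 (e, b)]| < #|[set e in A | R1 (e, b)]|.
  move=> eq_card; apply/setP=> e; rewrite !inE.
  case eA: (e \in A) => //=; case h1: (R (e, b)); case h2: (R' (e, b)) => //.
    by have := card_lt _ _ e linR linR' eA h1 (negbT h2); rewrite eq_card ltnn.
  by have := card_lt _ _ e linR' linR eA h2 (negbT h1); rewrite eq_card ltnn.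
move=> l1 l2 eA R1e nR2e.
have sub : [set e' in A | R2 (e', b)] \subset [set e' in A | R1 (e', b)] :\ e.
  apply/subsetP=> e'; rewrite !inE => /andP[e'A R2e'].
  have ne : e' != e by apply: contraNneq nR2e => <-.
  have R2be : R2 (b, e) by have := lin_total l2 e b; rewrite (negbTE nR2e).
  have cmp := chA _ _ e'A eA.
  have le'e : le e' e by rewrite -(lin_comparableE l2 cmp) (lin_trans l2 R2e' R2be).
  have R1e'e : R1 (e', e) by rewrite (lin_comparableE l1 cmp).
  by rewrite ne e'A (lin_trans l1 R1e'e R1e).
apply: leq_ltn_trans (subset_leq_card sub) _.
by rewrite (cardsD1 e [set e' in A | R1 (e', b)]) inE eA R1e.
Qed.

Definition lin_of_key (k : U -> nat) : {ffun U * U -> bool} :=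
  [ffun p => k p.1 <= k p.2].

Lemma lin_of_keyP k : injective k -> {homo k : a b / le a b >-> a <= b} ->
  is_linearization le (lin_of_key k).
Proof.
move=> kinj kmono; apply/and5P; split; apply/forallP=> a; rewrite ?ffunE //=.
- apply/forallP=> b; rewrite !ffunE /=; apply/implyP=> /andP[h1 h2].
  by apply/eqP/kinj/eqP; rewrite eqn_leq h1 h2.
- apply/forallP=> b; apply/forallP=> c; rewrite !ffunE /=.
  by apply/implyP=> /andP[]; apply: leq_trans.
- by apply/forallP=> b; rewrite !ffunE /= leq_total.
- by apply/forallP=> b; apply/implyP=> /kmono; rewrite ffunE.
Qed.

End Linearization.

Section LinearRank.
Variables (d : Order.disp_t) (T : finPOrderType d).

(* A linear extension of [T]: by height, ties broken by [enum_rank]. *)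
Definition lin_rank (i : T) := #|[set u | (u < i)%O]| * #|T| + enum_rank i.

Lemma lin_rank_lt i : lin_rank i < #|T| * #|T|.+1.
Proof.
rewrite /lin_rank mulnS [#|T| + _]addnC -addnS leq_add ?ltn_ord //.
by rewrite leq_mul2r max_card orbT.
Qed.

Lemma lin_rank_mono : {homo lin_rank : i i' / (i < i')%O >-> i < i'}.
Proof.
move=> i i' ii'.
have lt_height : #|[set u | (u < i)%O]| < #|[set u | (u < i')%O]|.
  apply: proper_card; apply/properP; split.
    by apply/subsetP=> u; rewrite !inE => /lt_trans; apply.
  by exists i; rewrite !inE ?ii' ?ltxx.
by rewrite /lin_rank (leq_trans (mulnD_lt_mul lt_height (ltn_ord _))) ?leq_addr.
Qed.

Lemma lin_rank_inj : injective lin_rank.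
Proof.
move=> i i' /mulnDr_small_inj[//||_ /val_inj]; first exact: ltn_ord.
exact: enum_rank_inj.
Qed.

End LinearRank.

Section ChainPosition.
Variables (d : Order.disp_t) (T : finPOrderType d) (S : {set T}).

Definition incomparable_to (i : T) := [exists s in S, ~~ (i >=< s)%O].
Definition chain_below (i : T) := #|[set s in S | (s < i)%O]|.
Definition chain_not_above (i : T) := #|[set s in S | ~~ (i < s)%O]|.

Lemma chain_below_lt s i : s \in S -> (s < i)%O -> chain_below s < chain_below i.
Proof.
move=> sS si; apply: proper_card; apply/properP; split.
  by apply/subsetP=> u; rewrite !inE => /andP[-> /lt_trans]; apply.
by exists s; rewrite !inE ?sS ?si ?ltxx ?andbF.
Qed.

Lemma chain_below_homo : {homo chain_below : i i' / (i <= i')%O >-> i <= i'}.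
Proof.
move=> i i' ii'; apply: subset_leq_card; apply/subsetP=> u; rewrite !inE.
by case/andP=> -> /lt_le_trans; apply.
Qed.

Lemma chain_not_above_homo : {homo chain_not_above : i i' / (i <= i')%O >-> i <= i'}.
Proof.
move=> i i' ii'; apply: subset_leq_card; apply/subsetP=> u; rewrite !inE.
by case/andP=> -> /=; apply: contra; apply: le_lt_trans.
Qed.

Lemma chain_below_le_not_above i : chain_below i <= chain_not_above i.
Proof.
apply: subset_leq_card; apply/subsetP=> u; rewrite !inE.
by case/andP=> -> ui; rewrite lt_gtF.
Qed.

Lemma chain_below_lt_not_above i :
  incomparable_to i -> chain_below i < chain_not_above i.
Proof.
case/existsP=> s /andP[sS nc]; apply: proper_card; apply/properP; split.
  by apply/subsetP=> u; rewrite !inE => /andP[-> ui]; rewrite lt_gtF.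
exists s; rewrite !inE sS /=.
  by apply: contra nc => /ltW; rewrite /Order.comparable => ->.
by apply: contra nc => /ltW; rewrite /Order.comparable => ->; rewrite orbT.
Qed.

Lemma chain_not_above_le_below i :
  i \notin S -> ~~ incomparable_to i -> chain_not_above i <= chain_below i.
Proof.
move=> iS nI; apply: subset_leq_card; apply/subsetP=> u; rewrite !inE.
case/andP=> uS niu; rewrite uS /=.
have cmp : (i >=< u)%O by apply: contraNT nI => nc; apply/existsP; exists u; rewrite uS.
case: (comparable_ltgtP cmp) niu => // eiu _.
by rewrite eiu uS in iS.
Qed.

Hypothesis chainS : {in S &, forall a b, (a >=< b)%O}.

Lemma incomparable_to_notin i : incomparable_to i -> i \notin S.
Proof. by case/existsP=> s /andP[sS]; apply: contra => /chainS ->. Qed.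

Lemma chain_below_inj : {in S &, injective chain_below}.
Proof.
move=> s s' sS s'S eq_below; case: (comparable_ltgtP (chainS sS s'S)) => // lt_ss'.
  by have := chain_below_lt sS lt_ss'; rewrite eq_below ltnn.
by have := chain_below_lt s'S lt_ss'; rewrite eq_below ltnn.
Qed.

Lemma chain_not_above_le_below_lt s i :
  s \in S -> (i < s)%O -> chain_not_above i <= chain_below s.
Proof.
move=> sS is_; apply: subset_leq_card; apply/subsetP=> u; rewrite !inE.
case/andP=> uS niu; rewrite uS /=.
case: (comparable_ltgtP (chainS uS sS)) => // [su|eus].
  by rewrite (lt_trans is_ su) in niu.
by rewrite eus is_ in niu.
Qed.

(* Take the lowest element of the chain incomparable with [i]. *)
Lemma incomparable_to_witness i : incomparable_to i ->
  exists2 s, s \in S & ~~ (i >=< s)%O && (chain_below s == chain_below i).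
Proof.
move=> Ii; have iS := incomparable_to_notin Ii.
case/existsP: (Ii) => s0 s0P.
case: (@arg_minnP _ s0 [pred s | (s \in S) && ~~ (i >=< s)%O] chain_below s0P).
move=> s /andP[sS nc] smin.
exists s => //; rewrite nc /=; apply/eqP/eq_card => u; rewrite !inE.
case uS: (u \in S) => //=; apply/idP/idP => [us|ui].
  case: (boolP (i >=< u)%O) => [cmp|ncu].
    case: (comparable_ltgtP cmp) => // [iu|eiu].
      by move: nc; rewrite /Order.comparable (ltW (lt_trans iu us)).
    by rewrite eiu uS in iS.
  by have := smin u; rewrite inE uS ncu /= leqNgt (chain_below_lt uS us) => /(_ isT).
case: (comparable_ltgtP (chainS uS sS)) => // [su|eus].
  by move: nc; rewrite /Order.comparable (ltW (lt_trans su ui)) orbT.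
by move: nc; rewrite /Order.comparable -eus (ltW ui) orbT.
Qed.

End ChainPosition.

Lemma card_tag_pred (I : finType) (x : I -> nat) (P : pred I) :
  #|[pred a : {i : I & 'I_(x i)} | P (tag a)]| = \sum_(i | P i) x i.
Proof.
rewrite -sum1_card (partition_big (fun a : {i : I & 'I_(x i)} => tag a) P) //=.
apply: eq_bigr => i Pi; rewrite sum1_card -[x i]card_ord.
rewrite -(card_imset _ (@eq_from_Tagged _ (fun i => 'I_(x i)) i)).
apply: eq_card => a; rewrite ?inE; apply/andP/imsetP => [[_ /eqP eai]|[y _ ->]].
  by subst i; exists (tagged a); rewrite ?taggedK.
by rewrite inE /= Pi.
Qed.

Section Lexsum.
Variables (d : Order.disp_t) (T : finPOrderType d) (x : T -> nat).

Lemma lexsum_le_tag (a b : lexsum_elt x) : lexsum_le a b -> (tag a <= tag b)%O.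
Proof. by rewrite /lexsum_le; case: eqP => [e _|//]; rewrite e. Qed.

Lemma lexsum_eq (a b : lexsum_elt x) :
  tag a = tag b -> nat_of_ord (tagged a) = nat_of_ord (tagged b) -> a = b.
Proof. by case: a b => i j [i' j'] /= eii'; subst i' => /val_inj ->. Qed.

End Lexsum.

Section ChainLexsum.
Variables (d : Order.disp_t) (T : finPOrderType d) (S : {set T}).
Hypothesis chainS : {in S &, forall a b, (a >=< b)%O}.
Variable m : T -> nat.

Local Notation Mx := (\max_(i : T) m i).+1.

Lemma m_lt_max i : m i < Mx.
Proof. by rewrite ltnS (leq_bigmax i). Qed.

(* The cells (i, j), j < m i, of the chains over elements incomparable to S,
   indexed in a type that does not depend on the chain lengths over S. *)
Definition incomp_cell := {p : T * 'I_Mx | incomparable_to S p.1 && (p.2 < m p.1)}.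
Definition incomp_weight := \sum_(i | incomparable_to S i) m i.

Lemma card_incomp_cell : #|{: incomp_cell}| = incomp_weight.
Proof.
rewrite card_sig -sum1_card /incomp_weight.
rewrite (eq_bigl (fun p : T * 'I_Mx => incomparable_to S p.1 && (p.2 < m p.1))) //.
rewrite -(pair_big_dep _ (fun i (j : 'I_Mx) => j < m i) (fun _ _ => 1)) /=.
apply: eq_bigr => i _; rewrite (eq_bigl (fun j : 'I_Mx => j < m i)) //.
by rewrite (big_ord_narrow (ltnW (m_lt_max i))) sum1_card card_ord.
Qed.

Section UpperBound.
Variable x : T -> nat.
Hypothesis x_offS : forall i, i \notin S -> x i = m i.
Local Notation E := (lexsum_elt x).
Local Notation le := (@lexsum_le d T x).

Definition cell_of (a : E) : T * 'I_Mx := (tag a, inord (tagged a)).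

Lemma cell_of_val (a : E) : tag a \notin S -> nat_of_ord (cell_of a).2 = tagged a.
Proof.
by move=> aS; rewrite inordK // (ltn_trans _ (m_lt_max (tag a))) // -x_offS.
Qed.

Lemma cell_of_inj (a b : E) : tag a \notin S -> tag b \notin S ->
  cell_of a = cell_of b -> a = b.
Proof.
move=> aS bS e; apply: lexsum_eq; first exact: (congr1 fst e).
by rewrite -cell_of_val // -cell_of_val // e.
Qed.

Lemma lexsum_le_chain (a b : E) : tag a \in S -> tag b \in S -> le a b || le b a.
Proof.
move=> aS bS; rewrite /lexsum_le eq_sym.
by case: eqP => _; [exact: leq_total | exact: chainS].
Qed.

Lemma lexsum_le_comparable (a b : E) : tag a \in S -> tag b \notin S ->
  ~~ incomparable_to S (tag b) -> le a b || le b a.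
Proof.
move=> aS bS nI; rewrite /lexsum_le.
have ne : (tag a == tag b) = false by apply: contraNF bS => /eqP <-.
rewrite ne eq_sym ne; apply: contraNT nI; rewrite negb_or => nc; rewrite /incomparable_to.
by apply/existsP; exists (tag a); rewrite aS /Order.comparable /= negb_or andbC.
Qed.

Definition chain_part := [set e : E | tag e \in S].

Lemma card_chain_part : #|chain_part| = \sum_(i in S) x i.
Proof.
rewrite -(card_tag_pred x (mem S)); apply: eq_card => a.
by rewrite !inE.
Qed.

Definition offchain_part (R : {ffun E * E -> bool}) :
    {ffun (T * 'I_Mx) * (T * 'I_Mx) -> bool} :=
  [ffun pq => [exists a : E, [exists b : E,
     [&& tag a \notin S, tag b \notin S, cell_of a == pq.1, cell_of b == pq.2
       & R (a, b)]]]].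

Definition below_cell (R : {ffun E * E -> bool}) (q : incomp_cell) :=
  [set e in chain_part |
     [exists a : E, [&& tag a \notin S, cell_of a == val q & R (e, a)]]].

Definition chain_counts (R : {ffun E * E -> bool}) :
    {ffun incomp_cell -> 'I_(\sum_(i in S) x i).+1} :=
  [ffun q => inord #|below_cell R q|].

Definition lin_code R := (offchain_part R, chain_counts R).

Lemma offchain_partE R a b : tag a \notin S -> tag b \notin S ->
  offchain_part R (cell_of a, cell_of b) = R (a, b).
Proof.
move=> aS bS; rewrite ffunE /=; apply/existsP/idP.
  case=> a' /existsP[b' /and5P[a'S b'S /eqP ea /eqP eb Rab]].
  by rewrite -(cell_of_inj a'S aS ea) -(cell_of_inj b'S bS eb).
by move=> Rab; exists a; apply/existsP; exists b; rewrite aS bS !eqxx Rab.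
Qed.

Lemma below_cellE R (b : E) (q : incomp_cell) :
  tag b \notin S -> val q = cell_of b -> below_cell R q = [set e in chain_part | R (e, b)].
Proof.
move=> bS qb; apply/setP=> e; rewrite !inE; congr (_ && _); apply/existsP/idP.
  by case=> a /and3P[aS /eqP ea Rea]; rewrite -(cell_of_inj aS bS (etrans ea qb)).
by move=> Reb; exists b; rewrite bS qb eqxx Reb.
Qed.

Lemma lin_code_chain_off R R' a b :
  is_linearization le R -> is_linearization le R' -> lin_code R = lin_code R' ->
  tag a \in S -> tag b \notin S -> R (a, b) = R' (a, b).
Proof.
move=> lR lR' eG aS bS.
have [Ib|nIb] := boolP (incomparable_to S (tag b)); last first.
  have cmp := lexsum_le_comparable aS bS nIb.
  by rewrite (lin_comparableE lR cmp) (lin_comparableE lR' cmp).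
have qP : incomparable_to S (cell_of b).1 && ((cell_of b).2 < m (cell_of b).1).
  by rewrite cell_of_val // /= Ib -x_offS // ltn_ord.
pose q : incomp_cell := exist _ (cell_of b) qP.
have chain : {in chain_part &, forall e e', le e e' || le e' e}.
  by move=> e e'; rewrite !inE; exact: lexsum_le_chain.
have count_lt R0 : #|below_cell R0 q| < (\sum_(i in S) x i).+1.
  rewrite ltnS -card_chain_part.
  by apply/subset_leq_card/subsetP => e; rewrite inE => /andP[].
have := congr1 (fun F : {ffun incomp_cell -> _} => nat_of_ord (F q)) (congr1 snd eG).
have qb : val q = cell_of b by [].
rewrite /= !ffunE !inordK // !(below_cellE _ bS qb) => eq_count.
by have /setP/(_ a) := lin_chain_below_eq lR lR' chain eq_count; rewrite !inE aS.
Qed.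

Lemma lin_code_inj R R' : is_linearization le R -> is_linearization le R' ->
  lin_code R = lin_code R' -> R = R'.
Proof.
move=> lR lR' eG; apply/ffunP=> -[a b].
have [aS|aS] := boolP (tag a \in S); have [bS|bS] := boolP (tag b \in S).
- have cmp := lexsum_le_chain aS bS.
  by rewrite (lin_comparableE lR cmp) (lin_comparableE lR' cmp).
- exact: lin_code_chain_off.
- have nab : a != b by apply: contraNneq aS => ->.
  by rewrite (lin_asym lR nab) (lin_asym lR' nab) (lin_code_chain_off lR lR' eG bS aS).
- by rewrite -!offchain_partE //; have := congr1 fst eG => /= ->.
Qed.

Lemma Lplus_upper_bound :
  Lplus x <=
  2 ^ #|{: (T * 'I_Mx) * (T * 'I_Mx)}| * (\sum_(i in S) x i).+1 ^ incomp_weight.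
Proof.
have := @leq_card_in _ _ lin_code [pred R : {ffun E * E -> bool} | is_linearization le R].
rewrite card_prod !card_ffun card_bool card_ord card_incomp_cell; apply.
by move=> R R'; rewrite !inE; exact: lin_code_inj.
Qed.

End UpperBound.

Section LowerBound.
Variable B : nat.
Hypothesis B_gt0 : 0 < B.

Definition index_bound := (#|T| * #|T|.+1 * Mx).+1.
Definition chain_len := index_bound * B.
Definition chain_len_at i := if i \in S then chain_len else m i.

Local Notation E := (lexsum_elt chain_len_at).
Local Notation le := (@lexsum_le d T chain_len_at).

Lemma chain_len_at_offS i : i \notin S -> chain_len_at i = m i.
Proof. by rewrite /chain_len_at => /negbTE ->. Qed.

Lemma tagged_lt_chain_len (a : E) : tag a \in S -> tagged a < chain_len.
Proof. by case: a => i /= + iS; rewrite /chain_len_at iS. Qed.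

Lemma tagged_lt_max (a : E) : tag a \notin S -> tagged a < Mx.
Proof. by move=> aS; rewrite (ltn_trans _ (m_lt_max (tag a))) // -chain_len_at_offS. Qed.

Definition cell_index (a : E) := lin_rank (tag a) * Mx + tagged a.

Lemma cell_index_lt (a : E) : tag a \notin S -> cell_index a < index_bound.
Proof.
by move=> aS; rewrite ltnS ltnW // mulnD_lt_mul ?lin_rank_lt ?tagged_lt_max.
Qed.

Lemma cell_index_inj (a b : E) : tag a \notin S -> tag b \notin S ->
  cell_index a = cell_index b -> a = b.
Proof.
move=> aS bS e.
have [/lin_rank_inj ? ?] := mulnDr_small_inj (tagged_lt_max aS) (tagged_lt_max bS) e.
exact: lexsum_eq.
Qed.

Lemma cell_index_homo (a b : E) :
  tag a \notin S -> le a b -> cell_index a <= cell_index b.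
Proof.
rewrite /lexsum_le /cell_index => aS; case: eqP => [e|/eqP ne le_ab].
  by rewrite [in lin_rank (tag a)]e leq_add2l.
have lt_ab : (tag a < tag b)%O by rewrite lt_neqAle ne.
apply/ltnW/(leq_trans (mulnD_lt_mul (lin_rank_mono lt_ab) (tagged_lt_max aS))).
exact: leq_addr.
Qed.

Section Choice.
Variable c : {ffun incomp_cell -> 'I_B}.

Definition choice (a : E) : nat :=
  if insub (cell_of a) : option incomp_cell is Some q then c q else 0.

Lemma choice_lt a : choice a < B.
Proof. by rewrite /choice; case: insub. Qed.

Lemma choiceE a (q : incomp_cell) : cell_of a = val q -> choice a = c q.
Proof. by move=> aq; rewrite /choice aq valK. Qed.

(* The elements over an element incomparable to S are spread inside the block
   of the chain at its height; [choice] fixes their slot up to [B] positions. *)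
Definition offset (a : E) :=
  if incomparable_to S (tag a) then cell_index a * B + choice a else 0.

Definition coord (a : E) := chain_below S (tag a) * chain_len +
  (if tag a \in S then nat_of_ord (tagged a) else offset a).

Definition pos (a : E) := if tag a \in S then (coord a).*2.+1 else (coord a).*2.
Definition tiebreak (a : E) := if tag a \in S then 0 else cell_index a.
Definition key (a : E) := pos a * index_bound + tiebreak a.

Lemma offset_lt a : tag a \notin S -> offset a < chain_len.
Proof.
move=> aS; rewrite /offset; case: ifP => _; last by rewrite muln_gt0 B_gt0.
by rewrite mulnD_lt_mul ?cell_index_lt ?choice_lt.
Qed.

Lemma coord_lt a : coord a < (chain_below S (tag a)).+1 * chain_len.
Proof.
rewrite /coord mulSn addnC ltn_add2r.
by case: ifP => aS; [exact: tagged_lt_chain_len | exact/offset_lt/negbT].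
Qed.

Lemma coord_le_not_above a : tag a \notin S ->
  coord a <= chain_not_above S (tag a) * chain_len.
Proof.
move=> aS; have [Ia|nIa] := boolP (incomparable_to S (tag a)).
  apply/ltnW/(leq_trans (coord_lt a)).
  by rewrite leq_mul2r chain_below_lt_not_above ?orbT.
rewrite /coord /offset (negbTE aS) (negbTE nIa) addn0 leq_mul2r.
by rewrite chain_below_le_not_above orbT.
Qed.

Lemma tiebreak_lt a : tiebreak a < index_bound.
Proof. by rewrite /tiebreak; case: ifP => [//|/negbT]; apply: cell_index_lt. Qed.

Lemma key_lt_pos_lt a b : pos a < pos b -> key a < key b.
Proof.
move=> lt_ab; apply: leq_trans (mulnD_lt_mul lt_ab (tiebreak_lt a)) _.
exact: leq_addr.
Qed.

Lemma key_le_pos_le a b :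
  pos a <= pos b -> tiebreak a <= tiebreak b -> key a <= key b.
Proof. by move=> pab tab; rewrite leq_add // leq_mul2r pab orbT. Qed.

Lemma key_le_pos_neq a b : pos a != pos b -> (key a <= key b) = (pos a < pos b).
Proof.
case: ltngtP => // [/key_lt_pos_lt/ltnW -> // | /key_lt_pos_lt ba _].
by rewrite leqNgt ba.
Qed.

Lemma offset_homo a b : tag a \notin S -> tag b \notin S ->
  incomparable_to S (tag b) -> le a b -> offset a <= offset b.
Proof.
move=> aS bS Ib le_ab; rewrite /offset Ib; case: ifP => // _.
have := cell_index_homo aS le_ab; rewrite leq_eqVlt => /orP[/eqP|lt_ab].
  by move/(cell_index_inj aS bS) ->.
apply/ltnW/(leq_trans (mulnD_lt_mul lt_ab (choice_lt a))).
exact: leq_addr.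
Qed.

Lemma coord_homo_offchain a b : tag a \notin S -> tag b \notin S ->
  le a b -> coord a <= coord b.
Proof.
move=> aS bS le_ab; have le_tag := lexsum_le_tag le_ab.
have := chain_below_homo S le_tag; rewrite leq_eqVlt => /orP[/eqP eq_below|lt_below].
  rewrite /coord eq_below (negbTE aS) (negbTE bS) leq_add2l.
  have [Ia|/negbTE nIa] := boolP (incomparable_to S (tag a)); last by rewrite /offset nIa.
  apply: offset_homo => //; apply: contraT => nIb.
  have := chain_not_above_le_below bS nIb; have := chain_below_lt_not_above Ia.
  have := chain_not_above_homo S le_tag; rewrite eq_below => h1 h2 h3.
  by have := leq_trans h2 (leq_trans h1 h3); rewrite ltnn.
apply/ltnW/(leq_trans (coord_lt a)); rewrite /coord.
by apply: leq_trans (leq_addr _ _); rewrite leq_mul2r lt_below orbT.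
Qed.

Lemma coord_lt_chain_lt a b : tag a \in S -> (tag a < tag b)%O -> coord a < coord b.
Proof.
move=> aS lt_ab; apply: (leq_trans (coord_lt a)); rewrite /coord.
by apply: leq_trans (leq_addr _ _); rewrite leq_mul2r chain_below_lt ?orbT.
Qed.

Lemma coord_le_chain_gt a b : tag a \notin S -> tag b \in S -> (tag a < tag b)%O ->
  coord a <= coord b.
Proof.
move=> aS bS lt_ab; apply: (leq_trans (coord_le_not_above aS)); rewrite /coord bS.
by apply: leq_trans (leq_addr _ _); rewrite leq_mul2r chain_not_above_le_below_lt ?orbT.
Qed.

Lemma key_homo : {homo key : a b / le a b >-> a <= b}.
Proof.
move=> a b le_ab; have le_tag := lexsum_le_tag le_ab.
have [aS|aS] := boolP (tag a \in S); last first.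
  have [bS|bS] := boolP (tag b \in S).
    have lt_ab : (tag a < tag b)%O.
      by rewrite lt_neqAle le_tag andbT; apply: contraNneq aS => ->.
    apply/ltnW/key_lt_pos_lt; rewrite /pos (negbTE aS) bS ltnS leq_double.
    exact: coord_le_chain_gt.
  apply: key_le_pos_le; rewrite /pos /tiebreak (negbTE aS) (negbTE bS).
    by rewrite leq_double coord_homo_offchain.
  exact: cell_index_homo.
have [eq_tag|ne_tag] := eqVneq (tag a) (tag b).
  move: a b le_ab aS eq_tag {le_tag} => [i j] [i' j'] /= le_ab iS eq_i; subst i'.
  rewrite /lexsum_le eqxx /= in le_ab.
  apply: key_le_pos_le; rewrite /pos /tiebreak /coord /= iS //.
  by rewrite ltnS leq_double leq_add2l.
apply/ltnW/key_lt_pos_lt; have lt_ab : (tag a < tag b)%O by rewrite lt_neqAle ne_tag.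
rewrite /pos aS; case: ifP => _; rewrite ?ltnS ?ltn_double ?ltn_Sdouble.
  exact: coord_lt_chain_lt.
exact: coord_lt_chain_lt.
Qed.

Lemma key_inj : injective key.
Proof.
move=> a b /mulnDr_small_inj[||eq_pos eq_tb]; try exact: tiebreak_lt.
move: eq_pos; rewrite /pos.
have [aS|aS] := boolP (tag a \in S); have [bS|bS] := boolP (tag b \in S);
  try by move/(congr1 odd); rewrite /= !odd_double.
  move=> /succn_inj/double_inj; rewrite /coord aS bS.
  move=> /mulnDr_small_inj[||/(chain_below_inj chainS aS bS) eq_tag eq_j];
    try exact: tagged_lt_chain_len.
  exact: lexsum_eq.
move=> _; apply: (cell_index_inj aS bS).
by move: eq_tb; rewrite /tiebreak (negbTE aS) (negbTE bS).
Qed.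

End Choice.

Definition lin_of_choice c := lin_of_key (key c).

Lemma lin_of_choiceP c : is_linearization le (lin_of_choice c).
Proof. by apply: lin_of_keyP; [apply: key_inj | apply: key_homo]. Qed.

(* Two choices differing at a cell over [i] are separated by an element of the
   chain at the height of [i], incomparable to [i]. *)
Lemma lin_of_choice_inj : injective lin_of_choice.
Proof.
move=> c c' eL; apply/ffunP => q; apply/val_inj/eqP; apply: contraT => ne.
case: q ne => -[i j] /= qP; set q := exist _ (i, j) qP => ne.
have /andP[/= Ii jm] := qP.
have iS := incomparable_to_notin chainS Ii.
have jb : j < chain_len_at i by rewrite chain_len_at_offS.
pose b : E := Tagged _ (Ordinal jb).
have offsetE c0 : offset c0 b = cell_index b * B + c0 q.
  by rewrite /offset /= Ii (choiceE _ (q := q)) //= /cell_of /= inord_val.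
have [s sS /andP[_ /eqP eq_below]] := incomparable_to_witness chainS Ii.
set u := minn (offset c b) (offset c' b).
have us : u < chain_len_at s.
  by rewrite /chain_len_at sS (leq_ltn_trans (geq_minl _ _) (offset_lt c (a:=b) iS)).
pose e : E := Tagged _ (Ordinal us).
have linE c0 : lin_of_choice c0 (e, b) = (u < offset c0 b).
  rewrite ffunE /= key_le_pos_neq /pos /coord /= sS (negbTE iS) eq_below.
    by rewrite ltn_Sdouble ltn_add2l.
  by apply/eqP => /(congr1 odd); rewrite /= !odd_double.
have := linE c; rewrite eL linE /u !offsetE.
by move: (cell_index b * B) (val (c q)) (val (c' q)) ne => X v v'; lia.
Qed.

Lemma Lplus_lower_bound : B ^ incomp_weight <= Lplus chain_len_at.
Proof.
rewrite -card_incomp_cell -[B]card_ord -card_ffun -(card_imset _ lin_of_choice_inj).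
apply/subset_leq_card/subsetP => _ /imsetP[c _ ->].
by rewrite inE lin_of_choiceP.
Qed.

End LowerBound.

End ChainLexsum.

Section PowerGrowth.
Variable R : archiFieldType.
Local Open Scope ring_scope.

Lemma natpow_not_dominated (a C : R) (P : nat) : 0 < a ->
  ~ (forall t : nat, (0 < t)%N -> a * t%:R ^+ P.+1 <= C * t%:R ^+ P).
Proof.
move=> a_gt0 dom; set q := `|C| / a.
have q_ge0 : 0 <= q by rewrite divr_ge0 ?normr_ge0 ?ltW.
have Cq : `|C| = q * a by rewrite divfK ?gt_eqF.
pose t := (Num.bound q).+1.
have qt : q < t%:R by rewrite (lt_le_trans (archi_boundP q_ge0)) ?ler_nat.
have C_lt : C < a * t%:R by have := real_ler_norm (num_real C); nra.
have tP_gt0 : 0 < t%:R ^+ P :> R by rewrite exprn_gt0 ?ltr0n.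
have := dom t isT; rewrite exprSr; move: tP_gt0 C_lt.
move: (t%:R ^+ P : R) (t%:R : R) => y tr; nra.
Qed.

Lemma norm_sum_natpow_le (X : eqType) (s : seq X) (p : pred X) (cf : X -> R)
  (g : X -> nat) (G t : nat) : (0 < t)%N -> {in s, forall y, p y -> (g y <= G)%N} ->
  `|\sum_(y <- s | p y) cf y * t%:R ^+ g y| <= (\sum_(y <- s) `|cf y|) * t%:R ^+ G.
Proof.
move=> t_gt0 gG; apply: (le_trans (ler_norm_sum _ _ _)); rewrite big_distrl /=.
rewrite big_mkcond /= !big_seq; apply: ler_sum => y ys.
case: ifP => py; last by rewrite mulr_ge0 ?exprn_ge0.
by rewrite normrM normrX normr_nat ler_wpM2l // ler_weXn2l ?gG // ler1n.
Qed.

Lemma natpow_sum_not_dominated (X : eqType) (s : seq X) (cf : X -> R)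
  (g : X -> nat) (y0 : X) (C : R) (P : nat) :
  uniq s -> y0 \in s -> cf y0 != 0 -> {in s, forall y, y != y0 -> (g y < g y0)%N} ->
  (P < g y0)%N ->
  ~ (forall t : nat, (0 < t)%N -> `|\sum_(y <- s) cf y * t%:R ^+ g y| <= C * t%:R ^+ P).
Proof.
move=> s_uniq y0s cf0 gtop Ptop dom.
have [Q gQ] : exists Q, g y0 = Q.+1.
  by exists (g y0).-1; rewrite prednK // (leq_ltn_trans _ Ptop).
rewrite gQ ltnS in Ptop gtop.
set M := \sum_(y <- s) `|cf y|.
apply: (natpow_not_dominated (a := `|cf y0|) (C := `|C| + M) (P := Q)) => [|t t_gt0].
  by rewrite normr_gt0.
have t_ge1 : 1 <= t%:R :> R by rewrite ler1n.
have rest_le : `|\sum_(y <- s | y != y0) cf y * t%:R ^+ g y| <= M * t%:R ^+ Q.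
  by apply: norm_sum_natpow_le => // y ys /(gtop y ys).
have dom_le : C * t%:R ^+ P <= `|C| * t%:R ^+ Q.
  apply: le_trans (ler_wpM2l (normr_ge0 C) (ler_weXn2l t_ge1 Ptop)).
  by rewrite ler_wpM2r ?exprn_ge0 ?ler0n ?real_ler_norm ?num_real.
have := dom t t_gt0; rewrite (bigD1_seq y0) //= gQ => top_le.
rewrite -(normr_nat R t) -normrX -normrM mulrDl !normr_nat.
set top := cf y0 * _ in top_le *; set rest := \sum_(y <- s | _) _ in top_le rest_le.
have top_le_sum : `|top| <= `|top + rest| + `|rest|.
  by rewrite -[X in `|X| <= _](addrK rest) ler_normB.
apply: le_trans top_le_sum _; apply: lerD => //.
exact: le_trans top_le dom_le.
Qed.

End PowerGrowth.

Lemma big_undup_partition (X Y : eqType) (R : nmodType) (s : seq X) (k : X -> Y)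
  (F : X -> R) :
  (\sum_(y <- s) F y = \sum_(u <- undup (map k s)) \sum_(y <- s | k y == u) F y)%R.
Proof.
under [RHS]eq_bigr => u _ do rewrite big_mkcond.
rewrite exchange_big /=; apply: eq_big_seq => y ys.
rewrite -big_mkcond /= big_const_seq.
have -> : count (fun u => k y == u) (undup (map k s)) = 1%N.
  rewrite (eq_count (a2 := pred1 (k y))); last by move=> u; rewrite /= eq_sym.
  by rewrite count_uniq_mem ?undup_uniq // mem_undup map_f.
by rewrite /= addr0.
Qed.

Section MpolySupport.
Variables (V : finType) (f : mpoly V).
Local Open Scope ring_scope.

Definition msupp := [seq u <- undup (unzip1 f) | mcoef f u != 0].
Definition expdeg (u : {ffun V -> nat}) : nat := (\sum_v u v)%N.

Lemma msupp_uniq : uniq msupp.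
Proof. by rewrite filter_uniq // undup_uniq. Qed.

Lemma mcoef_msupp u : u \in msupp -> mcoef f u != 0.
Proof. by rewrite mem_filter => /andP[]. Qed.

Lemma mdeg_msupp : mdeg f = (\max_(u <- msupp) expdeg u)%N.
Proof.
rewrite /mdeg /msupp big_filter -(big_map fst (fun u => mcoef f u != 0) expdeg).
by rewrite big_undup //; exact: maxnn.
Qed.

Lemma expdeg_le_mdeg u : u \in msupp -> (expdeg u <= mdeg f)%N.
Proof. by move=> uf; rewrite mdeg_msupp (leq_bigmax_seq _ uf). Qed.

Lemma vars_in_exponent (S : {set V}) u : vars_in f S -> u \in unzip1 f ->
  forall v, v \notin S -> u v = 0%N.
Proof.
move=> /allP fS /mapP[p pf ->] v vS.
by move/forallP: (fS p pf) => /(_ v); rewrite vS => /eqP.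
Qed.

Lemma meval_natpow (S : {set V}) (x : V -> nat) (t : nat) (w : V -> nat) :
  vars_in f S -> (forall v, v \in S -> x v = (t ^ w v)%N) ->
  meval f x = \sum_(u <- msupp) mcoef f u * t%:R ^+ (\sum_v u v * w v)%N.
Proof.
move=> fS xS; rewrite /meval (big_undup_partition _ fst) /msupp big_filter.
rewrite [RHS]big_mkcond /=; apply: eq_big_seq => u; rewrite mem_undup => uf.
have prodE : \prod_v (x v)%:R ^+ u v = t%:R ^+ (\sum_v u v * w v)%N :> rat.
  rewrite -prodrXr; apply: eq_bigr => v _.
  have [vS|vS] := boolP (v \in S); last by rewrite (vars_in_exponent fS uf vS) mul0n !expr0.
  by rewrite xS // natrX -exprM mulnC.
rewrite (eq_bigr (fun p => p.2 * t%:R ^+ (\sum_v u v * w v)%N)) -?big_distrl /=.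
  by case: eqP => [c0|//]; rewrite -/(mcoef f u) c0 mul0r.
by move=> p /eqP ->; rewrite prodE.
Qed.

End MpolySupport.

Lemma radix_sum_inj (bs n : nat) (dg dg' : 'I_n -> nat) :
  (forall r, dg r < bs) -> (forall r, dg' r < bs) ->
  \sum_(r < n) dg r * bs ^ r = \sum_(r < n) dg' r * bs ^ r -> dg =1 dg'.
Proof.
elim: n dg dg' => [|n IHn] dg dg' dg_lt dg'_lt; first by move=> _ [].
have shift (g : 'I_n.+1 -> nat) : \sum_(r < n.+1) g r * bs ^ r =
    (\sum_(r < n) g (lift ord0 r) * bs ^ r) * bs + g ord0.
  rewrite big_ord_recl expn0 muln1 addnC big_distrl /=; congr (_ + _).
  by apply: eq_bigr => r _; rewrite expnS mulnCA mulnC.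
rewrite !shift => /mulnDr_small_inj[] // /IHn eq_lift eq0 r.
by case: (unliftP ord0 r) => [r'|] ->; [apply: eq_lift | exact: eq0].
Qed.

Section Kronecker.
Variable V : finType.

Definition radix_code (bs : nat) (u : {ffun V -> nat}) := \sum_v u v * bs ^ enum_rank v.

Lemma radix_code_inj bs (u u' : {ffun V -> nat}) : (forall v, u v < bs) ->
  (forall v, u' v < bs) -> radix_code bs u = radix_code bs u' -> u = u'.
Proof.
move=> u_lt u'_lt; rewrite /radix_code !(reindex _ (onW_bij _ (enum_val_bij V))) /=.
under eq_bigr do rewrite enum_valK; under [in RHS]eq_bigr do rewrite enum_valK.
move=> /(radix_sum_inj (fun r => u_lt _) (fun r => u'_lt _)) eq_u.
by apply/ffunP => v; rewrite -(enum_rankK v) eq_u.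
Qed.

Lemma radix_code_le bs (u : {ffun V -> nat}) : 0 < bs ->
  radix_code bs u <= expdeg u * bs ^ #|V|.
Proof.
move=> bs_gt0; rewrite /radix_code /expdeg big_distrl /=; apply: leq_sum => v _.
by rewrite leq_mul2l leq_pexp2l ?orbT // ltnW.
Qed.

(* Kronecker substitution with weights [W0 + bs ^ (rank v)]: the large [W0] makes
   the degree dominate, and base [bs > e] digits separate exponent vectors. *)
Lemma kronecker_weights (s : seq {ffun V -> nat}) (e D : nat) :
  D < e -> {in s, forall u, expdeg u <= e} ->
  exists w : V -> nat,
    {in s &, injective (fun u : {ffun V -> nat} => \sum_v u v * w v)} /\
    forall u, u \in s -> expdeg u = e -> (\max_v w v) * D < \sum_v u v * w v.
Proof.
move=> lt_De deg_le; set bs := e.+1; set Y := (e * bs ^ #|V|).+1.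
set W0 := D.+1 * Y; exists (fun v => W0 + bs ^ enum_rank v).
have phiE (u : {ffun V -> nat}) :
    \sum_v u v * (W0 + bs ^ enum_rank v) = expdeg u * W0 + radix_code bs u.
  rewrite /expdeg /radix_code big_distrl -big_split.
  by apply: eq_bigr => v _; rewrite mulnDr.
have code_lt u : u \in s -> radix_code bs u < W0.
  move=> us; apply: leq_ltn_trans (radix_code_le u _) _ => //.
  apply: (@leq_ltn_trans (e * bs ^ #|V|)); last by rewrite /W0 mulSn ltn_addr.
  by rewrite leq_mul2r deg_le ?orbT.
have entry_lt u v : u \in s -> u v < bs.
  by move=> us; rewrite ltnS (leq_trans _ (deg_le u us)) // /expdeg (bigD1 v) //= leq_addr.
split=> [u u' us u's | u us deg_u]; rewrite !phiE.
  move=> /mulnDr_small_inj[] //; try exact: code_lt.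
  by move=> _; apply: radix_code_inj => v; apply: entry_lt.
have max_le : \max_(v : V) (W0 + bs ^ enum_rank v) <= W0 + bs ^ #|V|.
  by apply/bigmax_leqP => v _; rewrite leq_add2l leq_pexp2l // ltnW.
have pow_le : bs ^ #|V| <= Y by rewrite leqW // leq_pmull // (leq_ltn_trans _ lt_De).
apply: (leq_ltn_trans (leq_mul max_le (leqnn D))).
rewrite deg_u ltn_addr // /W0.
by move: pow_le lt_De; nia.
Qed.

End Kronecker.

Section Degree.
Variables (d : Order.disp_t) (T : finPOrderType d) (S : {set T}).
Hypothesis chainS : {in S &, forall a b, (a >=< b)%O}.
Variables (m : T -> nat) (f : mpoly T).
Hypothesis fS : vars_in f S.
Hypothesis f_Lplus : forall x : T -> nat, (forall i, i \notin S -> x i = m i) ->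
  ((Lplus x)%:R = meval f x)%R.

Local Notation D := (incomp_weight S m).
Local Notation Mx := (\max_(i : T) m i).+1.
Local Notation M := (\sum_(u <- msupp f) `|mcoef f u|)%R.

Lemma incomp_weight_le_mdeg : D <= mdeg f.
Proof.
rewrite leqNgt; apply/negP => lt_deg; set K := index_bound m.
apply: (@natpow_not_dominated _ 1 (M * K%:R ^+ mdeg f) (mdeg f)) => // B B_gt0.
have t_gt0 : 0 < chain_len m B by rewrite muln_gt0 B_gt0.
have lower : B ^ (mdeg f).+1 <= Lplus (chain_len_at S m B).
  exact: leq_trans (leq_pexp2l B_gt0 lt_deg) (Lplus_lower_bound chainS m B_gt0).
have upper : ((Lplus (chain_len_at S m B))%:R <= M * (chain_len m B)%:R ^+ mdeg f
    :> rat)%R.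
  rewrite f_Lplus; last exact: chain_len_at_offS.
  rewrite (meval_natpow (t := chain_len m B) (w := fun _ => 1) fS) => [|v vS].
    apply: le_trans (real_ler_norm (num_real _)) _.
    apply: (norm_sum_natpow_le (p := predT)) => // u us _.
    by under eq_bigr do rewrite muln1; exact: expdeg_le_mdeg.
  by rewrite /chain_len_at vS.
rewrite mul1r -mulrA -exprMn -natrM; apply: le_trans upper.
by rewrite -natrX ler_nat.
Qed.

Lemma Lplus_natpow_le (t : nat) (w : T -> nat) : 0 < t ->
  Lplus (fun v => if v \in S then t ^ w v else m v) <=
  2 ^ #|{: (T * 'I_Mx) * (T * 'I_Mx)}| * #|T|.+1 ^ D * t ^ ((\max_v w v) * D).
Proof.
move=> t_gt0; set x := fun v => _.
have x_offS i : i \notin S -> x i = m i by rewrite /x => /negbTE ->.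
apply: leq_trans (Lplus_upper_bound chainS x_offS) _.
rewrite -mulnA leq_mul2l expnM -expnMn leq_exp2rW ?orbT //.
have tW_gt0 : 0 < t ^ (\max_v w v) by rewrite expn_gt0 t_gt0.
rewrite mulSn -add1n leq_add //.
apply: leq_trans (_ : \sum_(v in S) t ^ (\max_u w u) <= _).
  apply: leq_sum => v vS; rewrite /x vS leq_pexp2l //.
  exact: (leq_bigmax v).
by rewrite sum_nat_const leq_mul2r max_card orbT.
Qed.

Lemma mdeg_le_incomp_weight : mdeg f <= D.
Proof.
rewrite leqNgt; apply/negP => lt_deg.
have supp_nil : msupp f != [::].
  by apply: contraTneq lt_deg; rewrite mdeg_msupp => ->; rewrite big_nil.
have [u0 u0f deg_u0] : exists2 u0, u0 \in msupp f & expdeg u0 = mdeg f.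
  have [u0 u0f u0_max] := seq_argmax (@expdeg _) supp_nil.
  exists u0 => //; apply/eqP; rewrite eqn_leq expdeg_le_mdeg // mdeg_msupp.
  by apply/bigmax_leqP_seq => u uf _; apply: u0_max.
have [w [phi_inj phi_top]] := kronecker_weights lt_deg (@expdeg_le_mdeg _ f).
pose phi (u : {ffun T -> nat}) := \sum_v u v * w v.
have [us usf us_max] := seq_argmax phi supp_nil.
pose C := 2 ^ #|{: (T * 'I_Mx) * (T * 'I_Mx)}| * #|T|.+1 ^ D.
apply: (natpow_sum_not_dominated (msupp_uniq f) usf (mcoef_msupp usf) _
  (_ : (\max_v w v) * D < phi us) (C := C%:R)) => [u uf ne | | t t_gt0].
- rewrite ltn_neqAle us_max // andbT; apply: contra ne => /eqP eq_phi.
  exact/eqP/phi_inj.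
- exact: leq_trans (phi_top u0 u0f deg_u0) (us_max u0 u0f).
set x := fun v => if v \in S then t ^ w v else m v.
have xS v : v \in S -> x v = t ^ w v by rewrite /x => ->.
rewrite -(meval_natpow fS xS) -f_Lplus; last by move=> i /negbTE; rewrite /x => ->.
by rewrite normr_nat -natrX -natrM ler_nat Lplus_natpow_le.
Qed.

End Degree.

Theorem corollary5p5 (d : Order.disp_t) (T : finPOrderType d) (S : {set T})
  (hS : forall a b, a \in S -> b \in S -> (a >=< b)%O)
  (m : T -> nat) (f : mpoly T) (hf : vars_in f S)
  (hrep : forall x : T -> nat, (forall i, i \notin S -> x i = m i) ->
            ((Lplus x)%:R = meval f x)%R) :
  mdeg f = \sum_(i | [exists s in S, ~~ (i >=< s)%O]) m i.
Proof.
apply/eqP; rewrite eqn_leq; apply/andP; split.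
- exact: (mdeg_le_incomp_weight hS hf hrep).
- exact: (incomp_weight_le_mdeg hS hf hrep).
Qed.
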